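(* Every instance of 2-SBCM has a solution with at most one block crossing before each meeting (i.e., $|B_i|\le 1$ for all $i$); in particular, it has a solution with at most $n$ block crossings in total, where $n$ is the number of meetings.
   Context: A storyline instance is a pair $(C,M)$ where $C=\{1,\dots,k\}$ is a set of characters and $M=[m_1,\dots,m_n]$ is a sequence of meetings with $m_i\subseteq C$; in 2-SBCM every meeting has exactly two characters. A permutation of $C$ lists each character exactly once. For $1\le a\le b<c\le k$, the block crossing $(a,b,c)$ maps $\langle \pi_1,\dots,\pi_k\rangle$ to $\langle \pi_1,\dots,\pi_{a-1},\pi_{b+1},\dots,\pi_c,\pi_a,\dots,\pi_b,\pi_{c+1},\dots,\pi_k\rangle$. A meeting fits (is supported by) a permutation if its characters occupy consecutive positions. A solution is a start permutation $\pi^0$ and sequences $B_1,\dots,B_n$ of block crossings (possibly empty) such that, with $\pi^i$ obtained by applying $B_i$ in order to $\pi^{i-1}$, $\pi^i$ supports $m_i$ for all $i$. *)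

From mathcomp Require Import all_boot.
Set Implicit Arguments. Unset Strict Implicit. Unset Printing Implicit Defensive.

(* Characters are 'I_k (0-indexed names); positions in a permutation are
   1-indexed as in the paper: position p holds nth _ pi (p-1). *)

Definition is_perm (k : nat) (pi : seq 'I_k) : bool := perm_eq pi (enum 'I_k).

Definition block_crossing := (nat * nat * nat)%type.

Definition valid_bc (k : nat) (bc : block_crossing) : bool :=
  let: (a, b, c) := bc in [&& 1 <= a, a <= b, b < c & c <= k].

(* <pi_1..pi_{a-1}, pi_{b+1}..pi_c, pi_a..pi_b, pi_{c+1}..pi_k> *)
Definition apply_bc (T : Type) (bc : block_crossing) (pi : seq T) : seq T :=
  let: (a, b, c) := bc in
  take a.-1 pi ++ take (c - b) (drop b pi) ++ take (b - a.-1) (drop a.-1 pi)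
    ++ drop c pi.

Definition apply_bcs (T : Type) (B : seq block_crossing) (pi : seq T) : seq T :=
  foldl (fun p bc => apply_bc bc p) pi B.

Definition supports (k : nat) (pi : seq 'I_k) (m : 'I_k * 'I_k) : bool :=
  ((index m.1 pi).+1 == index m.2 pi) || ((index m.2 pi).+1 == index m.1 pi).

Fixpoint perms_from (k : nat) (pi : seq 'I_k) (Bs : seq (seq block_crossing))
  : seq (seq 'I_k) :=
  match Bs with
  | [::] => [::]
  | B :: Bs' => let pi' := apply_bcs B pi in pi' :: perms_from pi' Bs'
  end.

Definition is_solution (k : nat) (M : seq ('I_k * 'I_k))
  (pi0 : seq 'I_k) (Bs : seq (seq block_crossing)) : Prop :=
  [/\ is_perm pi0,
      size Bs = size M,
      all (all (valid_bc k)) Bs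
    & all2 (fun pi m => supports pi m) (perms_from pi0 Bs) M].

From mathcomp Require Import all_boot.

Set Implicit Arguments.
Unset Strict Implicit.
Unset Printing Implicit Defensive.

(* One block crossing suffices to make any meeting {x, y} fit: if x sits at
   position p and y at position q > p + 1, the block crossing (p + 1, q - 1, q)
   swaps the block strictly between them with the one-element block holding y,
   so y lands right after x (symmetrically if y comes first).  Doing this
   greedily for the meetings in order, from any start permutation, gives the
   theorem. *)

Lemma apply_bc_move_after (T : Type) (A Mid R : seq T) (y : T) :
  apply_bc ((size A).+1, size A + size Mid, (size A + size Mid).+1)
           (A ++ Mid ++ y :: R)
  = A ++ y :: Mid ++ R.
Proof.
rewrite /apply_bc /= subSnn addKn.
set s := A ++ Mid ++ y :: R.
have drop_y : drop (size A + size Mid) s = y :: R.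
  by rewrite /s catA drop_size_cat ?size_cat.
have drop_R : drop (size A + size Mid).+1 s = R.
  by rewrite -add1n -drop_drop drop_y /= drop0.
by rewrite drop_y drop_R /s (take_size_cat _ (erefl (size A)))
  (drop_size_cat _ (erefl (size A))) (take_size_cat _ (erefl (size Mid))) /= take0.
Qed.

Lemma supports_sym (k : nat) (pi : seq 'I_k) (x y : 'I_k) :
  supports pi (x, y) = supports pi (y, x).
Proof. by rewrite /supports orbC. Qed.

Section MoveNextTo.

Variables (k : nat) (pi : seq 'I_k).
Hypothesis pi_perm : is_perm pi.

Lemma mem_perm (z : 'I_k) : z \in pi.
Proof. by rewrite (perm_mem pi_perm) mem_enum. Qed.

Lemma size_perm : size pi = k.
Proof. by rewrite (perm_size pi_perm) size_enum_ord. Qed.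

Lemma move_next_to (x y : 'I_k) : (index x pi).+1 < index y pi ->
  exists bc,
    [/\ valid_bc k bc, is_perm (apply_bc bc pi) & supports (apply_bc bc pi) (x, y)].
Proof.
set i := index x pi; set j := index y pi => lt_ij.
have lt_j : j < size pi by rewrite index_mem mem_perm.
have drop_j : drop j pi = y :: drop j.+1 pi.
  by rewrite (drop_nth y lt_j) nth_index ?mem_perm.
have def_pi : pi = take i.+1 pi ++ drop i.+1 (take j pi) ++ y :: drop j.+1 pi.
  by rewrite catA -(take_takel _ (ltnW lt_ij)) cat_take_drop -drop_j cat_take_drop.
set A := take i.+1 pi in def_pi *; set Mid := drop i.+1 _ in def_pi *.
have size_A : size A = i.+1.
  by rewrite size_takel // (ltn_trans (ltnW lt_ij) lt_j).
have size_AMid : size A + size Mid = j.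
  by rewrite size_A size_drop (size_takel (ltnW lt_j)) (subnKC (ltnW lt_ij)).
have x_A : x \in A by rewrite in_take ?mem_perm.
have y_A : y \notin A by rewrite in_take ?mem_perm // -leqNgt ltnW.
have index_x_A : index x A = i by rewrite /i [in RHS]def_pi index_cat x_A.
exists ((size A).+1, size A + size Mid, (size A + size Mid).+1).
rewrite [in apply_bc _ pi]def_pi apply_bc_move_after.
split.
- by rewrite /valid_bc size_AMid size_A lt_ij ltnSn -size_perm lt_j.
- rewrite /is_perm (perm_trans _ pi_perm) // [in X in perm_eq _ X]def_pi.
  by rewrite perm_cat2l -cat1s perm_catCA.
- by rewrite /supports /= !index_cat x_A (negbTE y_A) /= eqxx addn0 index_x_A size_A eqxx.
Qed.

Lemma one_bc_supports (x y : 'I_k) : x != y ->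
  exists B, [/\ size B <= 1, all (valid_bc k) B, is_perm (apply_bcs B pi)
              & supports (apply_bcs B pi) (x, y)].
Proof.
move=> neq_xy; case: (boolP (supports pi (x, y))) => [fit | /norP[]].
  by exists [::].
rewrite /= => not_xy not_yx.
have neq_index : index x pi != index y pi.
  apply: contra neq_xy => /eqP eq_index.
  by rewrite -(nth_index x (mem_perm x)) eq_index nth_index ?mem_perm.
case: ltngtP neq_index => // lt_index _.
- have lt_next : (index x pi).+1 < index y pi by rewrite ltn_neqAle not_xy.
  have [bc [valid perm fit]] := move_next_to lt_next.
  by exists [:: bc]; split; rewrite /= ?valid.
- have lt_next : (index y pi).+1 < index x pi by rewrite ltn_neqAle not_yx.
  have [bc [valid perm fit]] := move_next_to lt_next.
  by exists [:: bc]; split; rewrite /= ?valid // supports_sym.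
Qed.

End MoveNextTo.

Lemma greedy_solution (k : nat) (M : seq ('I_k * 'I_k)) (pi : seq 'I_k) :
  all (fun m => m.1 != m.2) M -> is_perm pi ->
  exists Bs : seq (seq block_crossing),
    [/\ size Bs = size M, all (all (valid_bc k)) Bs,
        all2 (fun pi m => supports pi m) (perms_from pi Bs) M
      & all (fun B => size B <= 1) Bs].
Proof.
elim: M pi => [|[x y] M IH] pi /=; first by exists [::].
case/andP=> neq_xy distinct_M perm_pi.
have [B [size_B valid_B perm_B fit_B]] := one_bc_supports perm_pi neq_xy.
have [Bs [size_Bs valid_Bs fit_Bs small_Bs]] := IH _ distinct_M perm_B.
by exists (B :: Bs); rewrite /= size_Bs valid_B valid_Bs fit_B fit_Bs size_B small_Bs.
Qed.

Lemma sumn_le_size (s : seq nat) : all (fun n => n <= 1) s -> sumn s <= size s.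
Proof.
elim: s => //= n s IH /andP[n_le1 /IH].
by rewrite -add1n; apply: leq_add.
Qed.

Theorem mainTheorem13 (k : nat) (M : seq ('I_k * 'I_k))
  (hM : all (fun m => m.1 != m.2) M) :
  exists (pi0 : seq 'I_k) (Bs : seq (seq block_crossing)),
    [/\ is_solution M pi0 Bs,
        all (fun B => size B <= 1) Bs
      & sumn (map size Bs) <= size M].
Proof.
have perm_enum : is_perm (enum 'I_k) by exact: perm_refl.
have [Bs [size_Bs valid_Bs fit_Bs small_Bs]] := greedy_solution hM perm_enum.
exists (enum 'I_k), Bs; split => //.
by rewrite -size_Bs -(size_map size) sumn_le_size // all_map.
Qed.
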